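(* Let $\mathcal I$ be an inference family on a finite hypergraph $H=(V,F)$, let $\boldsymbol\eta\in L$ with pseudomarginals $b_\alpha,b_i$, and for $\alpha\in F$ and distinct $i,j\in\alpha$ let $u^\alpha_{i\to j}=\mathrm{Var}_{b_j}(\phi_j)^{-1}\mathrm{Cov}_{b_\alpha}(\phi_j,\phi_i)$ and $$c^\alpha_{i\to j}:=\mathrm{Var}_{b_\alpha}(\phi_j)^{-1/2}\mathrm{Cov}_{b_\alpha}(\phi_j,\phi_i)\mathrm{Var}_{b_\alpha}(\phi_i)^{-1/2}.$$ Then $\mathcal M(\boldsymbol u)$ and $\mathcal M(\boldsymbol c)$ have the same set of eigenvalues.
   Context: Hypergraph notation: directed edges $\vec E=\{(\alpha\to i):i\in\alpha\in F\}$ with $s(\alpha\to i)=\alpha$, $t(\alpha\to i)=i$; $e'\rightharpoonup e$ means $t(e')\in s(e)$, $t(e')\ne t(e)$, $s(e')\ne s(e)$. For weights $\boldsymbol v=\{v^\alpha_{i\to j}\}$ with $v^\alpha_{i\to j}\in\mathbb{C}^{r_j\times r_i}$, $\mathcal M(\boldsymbol v)$ acts on $\bigoplus_{e}\mathbb{C}^{r_{t(e)}}$ by $(\mathcal M(\boldsymbol v)f)(e)=\sum_{e':e'\rightharpoonup e}v^{s(e)}_{t(e')\to t(e)}f(e')$. Inference family: exponential families $\mathcal E_i$ (statistic $\phi_i\in\mathbb{R}^{r_i}$) and $\mathcal E_\alpha$ on $\prod_{i\in\alpha}\mathcal X_i$ (statistic $(\bar\phi_\alpha,(\phi_i)_{i\in\alpha})$),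 with invertible covariance matrices and marginals of $\mathcal E_\alpha$ onto $x_i$ lying in $\mathcal E_i$. $L$ is the set of expectation parameters $((\eta_\alpha)_\alpha,(\eta_i)_i)$ with $\eta^\alpha_i=\eta_i$ for all $i\in\alpha$ (local consistency), identified with pseudomarginals $b_\alpha\in\mathcal E_\alpha$, $b_i\in\mathcal E_i$; in particular $b_i$ is the $x_i$-marginal of $b_\alpha$. *)

From HB Require Import structures.
From mathcomp Require Import all_boot all_order all_algebra.
From mathcomp Require Import all_classical all_reals all_analysis.
From mathcomp Require Import complex.
Set Implicit Arguments. Unset Strict Implicit. Unset Printing Implicit Defensive.
Import Order.TTheory GRing.Theory Num.Theory.
Local Open Scope ring_scope.
Local Open Scope classical_set_scope.

Definition is_psd_sqrt (R : realType) (n : nat) (A S : 'M[R]_n) : Prop :=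
  [/\ S^T = S, (forall v : 'cV[R]_n, 0 <= (v^T *m S *m v) 0 0) & S *m S = A].

(* the (positive semidefinite) matrix square root A^{1/2}, 0 if none exists *)
Definition msqrt (R : realType) (n : nat) (A : 'M[R]_n) : 'M[R]_n :=
  match pselect (exists S, is_psd_sqrt A S) with
  | left h => projT1 (cid h)
  | right _ => 0
  end.

Definition minvsqrt (R : realType) (n : nat) (A : 'M[R]_n) : 'M[R]_n :=
  invmx (msqrt A).

Definition expect (d : measure_display) (T : measurableType d) (R : realType)
  (P : probability T R) (f : T -> R) : R :=
  fine (\int[P]_w (f w)%:E).

Definition mean (d : measure_display) (T : measurableType d) (R : realType)
  (P : probability T R) (n : nat) (X : T -> 'cV[R]_n) : 'cV[R]_n :=
  \col_k expect P (fun w => X w k 0).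

Definition covm (d : measure_display) (T : measurableType d) (R : realType)
  (P : probability T R) (n m : nat) (X : T -> 'cV[R]_n) (Y : T -> 'cV[R]_m)
  : 'M[R]_(n, m) :=
  \matrix_(k, l) expect P (fun w => (X w k 0 - mean P X k 0) * (Y w l 0 - mean P Y l 0)).

(* directed edges (alpha -> i), i \in alpha \in F *)
Definition dedge (V : finType) (F : {set {set V}}) :=
  {p : {set V} * V | (p.1 \in F) && (p.2 \in p.1)}.

Definition src (V : finType) (F : {set {set V}}) (e : dedge F) : {set V} := (val e).1.
Definition tgt (V : finType) (F : {set {set V}}) (e : dedge F) : V := (val e).2.

Definition dadj (V : finType) (F : {set {set V}}) (e' e : dedge F) : bool :=
  [&& tgt e' \in src e, tgt e' != tgt e & src e' != src e].

(* index set of  ⊕_e C^{r_{t(e)}} *)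
Definition dindex (V : finType) (F : {set {set V}}) (r : V -> nat) :=
  {e : dedge F & 'I_(r (tgt e))}.

(* matrix of M(v) on ⊕_e K^{r_{t(e)}}:
   (M(v) f)(e) = sum_{e' ⇀ e} v^{s(e)}_{t(e') -> t(e)} f(e') *)
Definition Mop (K : fieldType) (V : finType) (F : {set {set V}}) (r : V -> nat)
  (v : {set V} -> forall i j : V, 'M[K]_(r j, r i)) : 'M[K]_#|{: dindex F r}| :=
  \matrix_(a, b)
    let p := enum_val a in let q := enum_val b in
    if dadj (tag q) (tag p)
    then v (src (tag p)) (tgt (tag q)) (tgt (tag p)) (tagged p) (tagged q)
    else 0.

Definition cplx (R : rcfType) (m n : nat) (A : 'M[R]_(m, n)) : 'M[R[i]]_(m, n) :=
  map_mx (fun x => (x%:C)%C) A.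

(* Marginal consistency makes Var_{b_alpha}(phi_i) equal to Sigma_i := Var_{b_i}(phi_i)
   for every i in alpha.  Sigma_i is symmetric positive semidefinite and invertible, so it
   has an invertible square root S_i, and c^alpha_{i->j} S_i = S_j u^alpha_{i->j}.  Hence
   the block-diagonal matrix acting by S_{t(e)} on the summand of e intertwines M(c) and
   M(u), and the two operators are similar. *)

From HB Require Import structures.
From mathcomp Require Import all_boot all_order all_algebra.
From mathcomp Require Import all_classical all_reals all_analysis.
From mathcomp Require Import complex.
From mathcomp Require Import measurable_realfun.
From mathcomp Require Import ring lra.
Import Order.TTheory GRing.Theory Num.Theory.
Local Open Scope ring_scope.
Local Open Scope classical_set_scope.
Set Implicit Arguments. Unset Strict Implicit. Unset Printing Implicit Defensive.

Local Open Scope sesquilinear_scope.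

Lemma poly_interpolation (K : fieldType) (f : K -> K) (s : seq K) :
  exists q : {poly K}, {in s, forall x, q.[x] = f x}.
Proof.
elim: s => [|x s [q qf]]; first by exists 0.
have [xs|xs] := boolP (x \in s).
  by exists q => y; rewrite inE => /predU1P[->|]; apply: qf.
pose N := \prod_(y <- s) ('X - y%:P).
have Nx : N.[x] != 0.
  rewrite horner_prod prodf_seq_neq0; apply/allP => y ys /=.
  by rewrite hornerXsubC subr_eq0; apply: contraNneq xs => ->.
exists (q + ((f x - q.[x]) / N.[x]) *: N) => y; rewrite inE => /predU1P[->|ys].
  by rewrite hornerD hornerZ mulfVK // addrC subrK.
rewrite hornerD hornerZ.
have /eqP -> : N.[y] == 0.
  by rewrite horner_prod prodf_seq_eq0; apply/hasP; exists y; rewrite //= hornerXsubC subrr.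
by rewrite mulr0 addr0 qf.
Qed.

Lemma horner_mx_trmx (K : comNzRingType) n (A : 'M[K]_n.+1) p :
  (horner_mx A p)^T = horner_mx A^T p.
Proof.
elim/poly_ind: p => [|p c IH]; first by rewrite !rmorph0 trmx0.
rewrite !rmorphD !rmorphM /= !horner_mx_X !horner_mx_C linearD /= tr_scalar_mx.
congr (_ + _); rewrite [X in X^T]/GRing.mul /= trmx_mul IH.
by have := comm_mx_horner p (comm_mx_refl A^T).
Qed.

Lemma trmx11 (K : Type) (M : 'M[K]_1) : M^T 0 0 = M 0 0.
Proof. by rewrite mxE. Qed.

Lemma horner_mx_unitary_conj (C : numClosedFieldType) n (P D : 'M[C]_n.+1) q :
  P \is unitarymx -> horner_mx (P ^t* *m D *m P) q = P ^t* *m horner_mx D q *m P.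
Proof.
by move=> Pu; rewrite -invmx_unitary // horner_mx_uconjC // unitarymx_unit.
Qed.

Lemma diag_form_ge0 (C : numClosedFieldType) n (s u : 'rV[C]_n) :
  (forall k, 0 <= s 0 k) -> 0 <= (u *m diag_mx s *m u ^t*) 0 0.
Proof.
move=> s_ge0; rewrite mul_mx_diag mxE; apply: sumr_ge0 => k _; rewrite !mxE.
by rewrite mulrAC mulr_ge0 // mul_conjC_ge0.
Qed.

Section RealSymmetric.
Variable R : rcfType.
Local Notation C := R[i].

Definition psdmx n (A : 'M[R]_n) := forall v : 'cV[R]_n, 0 <= (v^T *m A *m v) 0 0.

Lemma conj_cplx (x : R) : (x%:C%C : C)^* = x%:C%C.
Proof. exact: conjc_real. Qed.

Lemma cplx_inj m n : injective (@cplx R m n).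
Proof. exact: (@map_mx_inj _ _ (real_complex R)). Qed.

Lemma cplxM m n p (A : 'M[R]_(m, n)) (B : 'M[R]_(n, p)) :
  cplx (A *m B) = cplx A *m cplx B.
Proof. exact: map_mxM. Qed.

Lemma cplx1 n : cplx (1%:M : 'M[R]_n) = 1%:M.
Proof. exact: map_mx1. Qed.

Lemma cplx_trmx m n (A : 'M[R]_(m, n)) : cplx A^T = (cplx A)^T.
Proof. by apply/matrixP => i j; rewrite !mxE. Qed.

Lemma cplx_horner_mx n (A : 'M[R]_n.+1) (q : {poly R}) :
  cplx (horner_mx A q) = horner_mx (cplx A) (map_poly (real_complex R) q).
Proof. exact: map_horner_mx. Qed.

Lemma psdmx_cplx_form_ge0 n (A : 'M[R]_n) (w : 'rV[C]_n) :
  A^T = A -> psdmx A -> 0 <= (w *m cplx A *m w ^t*) 0 0.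
Proof.
move=> symA psdA.
pose x := map_mx (@complex.Re R) w; pose y := map_mx (@complex.Im R) w.
have ew : w = cplx x + 'i%C *: cplx y.
  by apply/matrixP => i j; rewrite !mxE [LHS]complexE mulrC.
have ewt : w ^t* = (cplx x)^T - 'i%C *: (cplx y)^T.
  by apply/matrixP => i j; rewrite !mxE; case: (w j i) => a b; simpc.
have form_ge0 (z : 'rV[R]_n) : 0 <= (cplx z *m cplx A *m (cplx z)^T) 0 0.
  by rewrite -cplx_trmx -!cplxM mxE ler0c -{1}[z]trmxK; exact: psdA.
(* With [w = x + i y], the cross terms cancel because [A] is symmetric. *)
have cross : (cplx y *m cplx A *m (cplx x)^T) 0 0 = (cplx x *m cplx A *m (cplx y)^T) 0 0.
  by rewrite -[LHS]trmx11 !trmx_mul trmxK -[(cplx A)^T]cplx_trmx symA mulmxA.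
rewrite ewt {1}ew !(mulmxDl, mulmxDr, mulmxN, =^~ scalemxAl, =^~ scalemxAr).
move: cross (form_ge0 x) (form_ge0 y); rewrite !mxE => ->.
have -> (a b c : C) : a + 'i%C * b + (- ('i%C * b) + 'i%C * - ('i%C * c)) = a + c.
  by rewrite mulrN mulrA -expr2 sqr_i; ring.
exact: addr_ge0.
Qed.

Lemma symmx_cplx_spectral n (A : 'M[R]_n) : A^T = A ->
  exists2 P : 'M[C]_n, P \is unitarymx & exists d, cplx A = P ^t* *m diag_mx d *m P.
Proof.
move=> symA; exists (spectralmx (cplx A)); first exact: spectral_unitarymx.
exists (spectral_diag (cplx A)); rewrite -invmx_unitary ?spectral_unitarymx //.
apply/orthomx_spectralP/hermitian_normalmx/is_hermitianmxP.
rewrite expr0 scale1r; apply/matrixP => i j.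
by rewrite !mxE conj_cplx -[in LHS]symA mxE.
Qed.

Lemma psdmx_spectral_ge0 n (A : 'M[R]_n) (P : 'M[C]_n) d k :
  A^T = A -> psdmx A -> P \is unitarymx -> cplx A = P ^t* *m diag_mx d *m P ->
  0 <= d 0 k.
Proof.
move=> symA psdA /unitarymxP PPt hA.
have PAP : P *m cplx A *m P ^t* = diag_mx d.
  by rewrite hA !mulmxA PPt mul1mx -mulmxA PPt mulmx1.
have -> : d 0 k = (row k P *m cplx A *m (row k P) ^t*) 0 0.
  have -> : d 0 k = diag_mx d k k by rewrite mxE eqxx.
  rewrite -PAP !mxE; apply: eq_bigr => j _; rewrite !mxE; congr (_ * _).
  by apply: eq_bigr => l _; rewrite !mxE.
exact: psdmx_cplx_form_ge0.
Qed.

Lemma psdmx_sqrt n (A : 'M[R]_n) :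
  A^T = A -> psdmx A -> exists S, [/\ S^T = S, psdmx S & S *m S = A].
Proof.
case: n A => [|n] A symA psdA.
  by exists 0; split=> [|v|]; [exact: trmx0 | rewrite !mxE big_ord0 | apply/matrixP => -[]].
have [P Pu [d hA]] := symmx_cplx_spectral symA.
have /unitarymxP PPt := Pu.
pose r k := complex.Re (d 0 k).
have dr k : d 0 k = (r k)%:C%C.
  have := ger0_Im (psdmx_spectral_ge0 k symA psdA Pu hA).
  by rewrite /r; case: (d 0 k) => a b /= ->.
have r_ge0 k : 0 <= r k by rewrite -ler0c -dr (psdmx_spectral_ge0 k symA psdA Pu hA).
have [q qr] := poly_interpolation (@Num.sqrt R) [seq r k | k <- enum 'I_n.+1].
have {}qr k : q.[r k] = Num.sqrt (r k) by apply: qr; apply: map_f; rewrite mem_enum.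
pose s := \row_k (Num.sqrt (r k))%:C%C.
have ss : diag_mx s *m diag_mx s = diag_mx d.
  rewrite mul_diag_mx; apply/matrixP => i k.
  by rewrite !mxE dr mulrnAr -rmorphM -expr2 sqr_sqrtr.
(* [q] interpolates the square root on the spectrum, so [q(A)] is a real matrix
   diagonalised by [P] with eigenvalues the square roots of those of [A]. *)
pose S := horner_mx A q.
have hS : cplx S = P ^t* *m diag_mx s *m P.
  rewrite cplx_horner_mx hA horner_mx_unitary_conj // horner_mx_diag.
  have -> // : map_mx (horner (map_poly (real_complex R) q)) d = s.
  by apply/matrixP => i k; rewrite !mxE (ord1 i) dr horner_map /= qr.
exists S; split.
- by rewrite /S horner_mx_trmx symA.
- move=> v; rewrite -ler0c.
  have -> : ((v^T *m S *m v) 0 0)%:C%C =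
            ((cplx v)^T *m (P ^t* *m diag_mx s *m P) *m cplx v) 0 0.
    by rewrite -hS -cplx_trmx -!cplxM [RHS]mxE.
  have vt : P *m cplx v = ((cplx v)^T *m P ^t*) ^t*.
    rewrite trmx_mul map_mxM trmxCK; congr (_ *m _).
    by apply/matrixP => i j; rewrite !mxE; exact/esym/conj_cplx.
  rewrite !mulmxA -(mulmxA _ P) vt.
  by apply: diag_form_ge0 => k; rewrite mxE ler0c sqrtr_ge0.
- apply: cplx_inj; rewrite cplxM hS [RHS]hA -ss.
  by rewrite !mulmxA -(mulmxA _ P) PPt mulmx1.
Qed.

End RealSymmetric.

Section Expectation.
Context d (T : measurableType d) (R : realType) (P : probability T R).
Local Notation integrableR f := (P.-integrable setT (EFin \o f)).

Lemma integrableR_eq f g : integrableR f -> f =1 g -> integrableR g.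
Proof.
by move=> intf fg; apply: (eq_integrable measurableT _ _ _ intf) => w _ /=; rewrite fg.
Qed.

Lemma integrableR_cst k : integrableR (fun=> k).
Proof. exact: finite_measure_integrable_cst. Qed.

Lemma integrableRD f g :
  integrableR f -> integrableR g -> integrableR (fun w => f w + g w).
Proof. by move=> intf intg; exact: (integrableR_eq (integrableD measurableT intf intg)). Qed.

Lemma integrableR_sum I (s : seq I) (f : I -> T -> R) :
  (forall i, integrableR (f i)) -> integrableR (fun w => \sum_(i <- s) f i w).
Proof.
move=> intf; elim: s => [|i s ih].
  by apply: (integrableR_eq (integrableR_cst 0)) => w; rewrite big_nil.
by apply: (integrableR_eq (integrableRD (intf i) ih)) => w; rewrite big_cons.
Qed.

Lemma integrableR_le (f g : T -> R) : measurable_fun setT f ->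
  (forall w, `|f w| <= g w) -> integrableR g -> integrableR f.
Proof.
move=> mf fg intg; apply: le_integrable intg => //; first exact/measurable_EFinP.
by move=> w _ /=; rewrite lee_fin (le_trans (fg w)) ?ler_norm.
Qed.

Lemma integrableR_mul (f g : T -> R) : measurable_fun setT f -> measurable_fun setT g ->
  integrableR (fun w => f w ^+ 2) -> integrableR (fun w => g w ^+ 2) ->
  integrableR (fun w => f w * g w).
Proof.
move=> mf mg intf intg; apply: (integrableR_le (g := fun w => f w ^+ 2 + g w ^+ 2)).
- exact: measurable_funM.
- move=> w; rewrite ler_norml; have := sqr_ge0 (f w + g w); have := sqr_ge0 (f w - g w).
  by move=> h1 h2; apply/andP; split; nra.
- exact: integrableRD.
Qed.

Lemma integrableR_sqrB (f : T -> R) c : measurable_fun setT f ->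
  integrableR (fun w => f w ^+ 2) -> integrableR (fun w => (f w - c) ^+ 2).
Proof.
move=> mf intf; apply: (integrableR_le (g := fun w => 2 * f w ^+ 2 + 2 * c ^+ 2)).
- by apply: measurable_funX; exact: measurable_funB.
- by move=> w; rewrite ger0_norm ?sqr_ge0 //; have := sqr_ge0 (f w + c); nra.
- apply: integrableRD; last exact: integrableR_cst.
  exact: (integrableR_eq (integrableZl measurableT 2 intf)).
Qed.

Lemma expectZ k f : integrableR f -> expect P (fun w => k * f w) = k * expect P f.
Proof. exact: RintegralZl. Qed.

Lemma expect_sum I (s : seq I) (f : I -> T -> R) : (forall i, integrableR (f i)) ->
  expect P (fun w => \sum_(i <- s) f i w) = \sum_(i <- s) expect P (f i).
Proof.
move=> intf; elim: s => [|i s ih].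
  by under eq_fun do rewrite big_nil; rewrite big_nil /expect integral0.
under eq_fun do rewrite big_cons.
by rewrite big_cons -ih; apply: RintegralD => //; exact: integrableR_sum.
Qed.

Lemma expect_ge0 f : (forall w, 0 <= f w) -> 0 <= expect P f.
Proof. by move=> f_ge0; apply: Rintegral_ge0 => w _. Qed.

Lemma covm_trmx n m (X : T -> 'cV[R]_n) (Y : T -> 'cV[R]_m) :
  (covm P X Y)^T = covm P Y X.
Proof.
by apply/matrixP => k l; rewrite !mxE; congr expect; apply/funext => w; exact: mulrC.
Qed.

Lemma covm_psd n (X : T -> 'cV[R]_n) :
  (forall k, measurable_fun setT (fun w => X w k 0)) ->
  (forall k, integrableR (fun w => X w k 0 ^+ 2)) -> psdmx (covm P X X).
Proof.
move=> mX intX v.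
pose Y k w := X w k 0 - mean P X k 0.
have mY k : measurable_fun setT (Y k) by apply: measurable_funB.
have intYY k l : integrableR (fun w => v k 0 * v l 0 * (Y k w * Y l w)).
  have intYkYl : integrableR (fun w => Y k w * Y l w).
    by apply: integrableR_mul => //; exact: integrableR_sqrB.
  exact: (integrableR_eq (integrableZl measurableT (v k 0 * v l 0) intYkYl)).
have -> : (v^T *m covm P X X *m v) 0 0 =
          \sum_l \sum_k expect P (fun w => v k 0 * v l 0 * (Y k w * Y l w)).
  rewrite mxE; apply: eq_bigr => l _; rewrite mxE mulr_suml; apply: eq_bigr => k _.
  rewrite expectZ; last by apply: integrableR_mul => //; exact: integrableR_sqrB.
  by rewrite !mxE /Y !mxE; ring.
under eq_bigr do rewrite -expect_sum //.
rewrite -expect_sum; last by move=> l; exact: integrableR_sum.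
apply: expect_ge0 => w.
have -> : \sum_l \sum_k v k 0 * v l 0 * (Y k w * Y l w) = (\sum_k v k 0 * Y k w) ^+ 2.
  rewrite expr2 mulr_suml; apply: eq_bigr => l _; rewrite mulr_sumr.
  by apply: eq_bigr => k _; ring.
exact: sqr_ge0.
Qed.
End Expectation.

Section Pushforward.
Context d1 d2 (T : measurableType d1) (U : measurableType d2) (R : realType).
Variables (P : probability T R) (Q : probability U R) (h : T -> U).
Hypotheses (mh : measurable_fun setT h)
  (PhQ : forall A, measurable A -> P (h @^-1` A) = Q A).

(* No integrability is needed: both sides split into the integrals of the positive
   and negative parts of [g]. *)
Lemma expect_pushforward (g : U -> R) : measurable_fun setT g ->
  expect P (fun w => g (h w)) = expect Q g.
Proof.
move=> mg; rewrite /expect; congr fine.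
have -> : (\int[Q]_y (g y)%:E = \int[pushforward P h]_y (g y)%:E)%E.
  by apply: eq_measure_integral => A mA _; exact/esym/PhQ.
have mge : measurable_fun setT (EFin \o g) by exact/measurable_EFinP.
rewrite integralE [in RHS]integralE !ge0_integral_pushforward //.
- by rewrite preimage_setT -funepos_comp -funeneg_comp.
- exact: measurable_funeneg.
- exact: measurable_funepos.
Qed.

Lemma covm_pushforward n m (X : U -> 'cV[R]_n) (Y : U -> 'cV[R]_m) :
  (forall k, measurable_fun setT (fun y => X y k 0)) ->
  (forall l, measurable_fun setT (fun y => Y y l 0)) ->
  covm P (fun w => X (h w)) (fun w => Y (h w)) = covm Q X Y.
Proof.
move=> mX mY; have mean_push p (Z : U -> 'cV[R]_p) :
    (forall k, measurable_fun setT (fun y => Z y k 0)) ->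
    mean P (fun w => Z (h w)) = mean Q Z.
  by move=> mZ; apply/matrixP => k i; rewrite !mxE; exact: expect_pushforward (mZ k).
rewrite /covm !mean_push //; apply/matrixP => k l; rewrite !mxE.
apply: (expect_pushforward (g := fun y => (X y k 0 - _) * (Y y l 0 - _))).
by apply: measurable_funM; exact: measurable_funB.
Qed.
End Pushforward.

Lemma eigenvalue_similar (K : fieldType) n (M1 M2 D D' : 'M[K]_n) :
  D *m D' = 1%:M -> M1 *m D = D *m M2 -> eigenvalue M1 =1 eigenvalue M2.
Proof.
move=> DD' M12; have D'D : D' *m D = 1%:M by exact: mulmx1C.
have M21 : M2 *m D' = D' *m M1.
  by rewrite -[M2]mul1mx -D'D -(mulmxA D') -M12 -!mulmxA DD' mulmx1.
have transfer (A B E E' : 'M[K]_n) a : E *m E' = 1%:M -> A *m E = E *m B ->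
    eigenvalue A a -> eigenvalue B a.
  move=> EE' AB /eigenvalueP[v vA v0]; apply/eigenvalueP; exists (v *m E).
    by rewrite -mulmxA -AB mulmxA vA scalemxAl.
  apply: contra v0 => /eqP vE0; apply/eqP.
  by rewrite -[v]mulmx1 -EE' mulmxA vE0 mul0mx.
by move=> a; apply/idP/idP; [exact: transfer DD' M12 | exact: transfer D'D M21].
Qed.

Section TargetBlockDiagonal.
Variables (K : fieldType) (V : finType) (F : {set {set V}}) (r : V -> nat).
Local Notation I := (dindex F r).
Local Notation N := #|{: I}|.
Local Notation TG := (fun e : dedge F => 'I_(r (tgt e))).

(* Acts by [T (tgt e)] on the summand indexed by [e]; the sum against an indicator
   avoids casting between ['I_(r (tgt e))] and the type of [tagged (enum_val b)]. *)
Definition tgt_diagmx (T : forall x : V, 'M[K]_(r x)) : 'M[K]_N :=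
  \matrix_(a, b) \sum_(k : 'I_(r (tgt (tag (enum_val a)))))
      T _ (tagged (enum_val a)) k * (enum_val b == Tagged TG k)%:R.

Lemma sum_enum_val_eq (g : 'I_N -> K) (t : I) :
  \sum_b g b * (enum_val b == t)%:R = g (enum_rank t).
Proof.
rewrite (bigD1 (enum_rank t)) //= enum_rankK eqxx mulr1 big1 ?addr0 // => b bt.
rewrite (_ : enum_val b == t = false) ?mulr0 //.
by apply: contraNF bt => /eqP <-; rewrite enum_valK.
Qed.

Lemma sum_Tagged_eq (y : I) (g : 'I_(r (tgt (tag y))) -> K) :
  \sum_l g l * (y == Tagged TG l)%:R = g (tagged y).
Proof.
rewrite (bigD1 (tagged y)) //= eq_Tagged eqxx mulr1 big1 ?addr0 // => l yl.
rewrite (_ : y == _ = false) ?mulr0 //.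
by apply: contraNF yl; rewrite eq_Tagged => /eqP ->.
Qed.

Lemma sum_dindex (H : 'I_N -> K) :
  \sum_b H b = \sum_(e : dedge F) \sum_(k : 'I_(r (tgt e))) H (enum_rank (Tagged TG k)).
Proof.
rewrite (eq_bigr (fun b => H (enum_rank (enum_val b)))) => [|b _]; last first.
  by rewrite enum_valK.
rewrite -(big_enum_val (fun y => H (enum_rank y))) /=.
rewrite (sig_big_dep predT (fun _ => predT)
           (fun e (k : 'I_(r (tgt e))) => H (enum_rank (Tagged TG k)))) /=.
by apply: eq_big => // -[].
Qed.

Lemma tgt_diagmx_rank T (t : I) c : tgt_diagmx T (enum_rank t) c =
  \sum_(l : 'I_(r (tgt (tag t)))) T _ (tagged t) l * (enum_val c == Tagged TG l)%:R.
Proof. by rewrite mxE enum_rankK. Qed.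

Lemma tgt_diagmxM T1 T2 :
  tgt_diagmx T1 *m tgt_diagmx T2 = tgt_diagmx (fun x => T1 x *m T2 x).
Proof.
apply/matrixP => a c.
transitivity (\sum_(k : 'I_(r (tgt (tag (enum_val a)))))
   T1 _ (tagged (enum_val a)) k * tgt_diagmx T2 (enum_rank (Tagged TG k)) c).
  rewrite mxE; under eq_bigr => b _ do rewrite [tgt_diagmx T1 _ _]mxE mulr_suml.
  rewrite exchange_big /=; apply: eq_bigr => k _.
  under eq_bigr => b _ do rewrite mulrAC.
  by rewrite (sum_enum_val_eq (fun b => T1 _ _ k * tgt_diagmx T2 b c)).
under eq_bigr => k _ do rewrite tgt_diagmx_rank /= mulr_sumr.
rewrite exchange_big [RHS]mxE; apply: eq_bigr => l _; rewrite mxE mulr_suml.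
by apply: eq_bigr => k _; rewrite mulrA.
Qed.

Lemma tgt_diagmx1 : tgt_diagmx (fun x => 1%:M) = 1%:M.
Proof.
apply/matrixP => a c; rewrite !mxE (bigD1 (tagged (enum_val a))) //= big1 ?addr0.
  have -> : Tagged TG (tagged (enum_val a)) = enum_val a by case: (enum_val a).
  by rewrite mxE eqxx mul1r (inj_eq enum_val_inj) eq_sym.
by move=> k ak; rewrite mxE eq_sym (negbTE ak) mul0r.
Qed.

Lemma Mop_tgt_diagmx (v w : {set V} -> forall i j : V, 'M[K]_(r j, r i))
    (T : forall x, 'M[K]_(r x)) :
  (forall e' e : dedge F, dadj e' e ->
     v (src e) (tgt e') (tgt e) *m T (tgt e') = T (tgt e) *m w (src e) (tgt e') (tgt e)) ->
  Mop F v *m tgt_diagmx T = tgt_diagmx T *m Mop F w.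
Proof.
move=> vTw; apply/matrixP => a c.
pose p := enum_val a; pose q := enum_val c.
transitivity (if dadj (tag q) (tag p) then
  (v (src (tag p)) (tgt (tag q)) (tgt (tag p)) *m T (tgt (tag q))) (tagged p) (tagged q) else 0).
  rewrite mxE sum_dindex.
  under eq_bigr => e _ do under eq_bigr => k _ do
    rewrite tgt_diagmx_rank [Mop F v _ _]mxE enum_rankK /=.
  rewrite (bigD1 (tag q)) //= [X in _ + X]big1 ?addr0; last first.
    move=> e eq'; apply: big1 => k _; rewrite big1 ?mulr0 // => l _.
    rewrite (_ : (enum_val c == _) = false) ?mulr0 //; apply: contraNF eq' => /eqP qe.
    by rewrite /q qe.
  under eq_bigr => k _ do rewrite sum_Tagged_eq.
  rewrite /p; case: ifP => _; first by rewrite mxE.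
  by rewrite big1 // => k _; rewrite mul0r.
rewrite [RHS]mxE; under eq_bigr => b _ do rewrite [tgt_diagmx T _ _]mxE mulr_suml.
rewrite exchange_big /=.
under eq_bigr => k _ do under eq_bigr => b _ do rewrite mulrAC.
under eq_bigr => k _ do rewrite (sum_enum_val_eq (fun b => T _ _ k * Mop F w b c)).
under eq_bigr => k _ do rewrite [Mop F w _ _]mxE enum_rankK /=.
rewrite -/p -/q; case: ifP => qp; first by rewrite (vTw _ _ qp) mxE.
by rewrite big1 // => k _; rewrite mulr0.
Qed.
End TargetBlockDiagonal.

Lemma invsqrt_conj_mulmx (K : comUnitRingType) n m (Sj : 'M[K]_n) (Si : 'M[K]_m)
    (C : 'M[K]_(n, m)) : Sj \in unitmx -> Si \in unitmx ->
  invmx Sj *m C *m invmx Si *m Si = Sj *m (invmx (Sj *m Sj) *m C).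
Proof.
move=> Sju Siu; have SjV : Sj *m invmx (Sj *m Sj) = invmx Sj.
  by rewrite -{1}(mulKmx Sju Sj) -mulmxA mulmxV ?mulmx1 // unitmx_mul Sju.
by rewrite mulmxKV // mulmxA SjV.
Qed.

Lemma msqrt_psd_sqrt (R : realType) n (A : 'M[R]_n) :
  A^T = A -> psdmx A -> is_psd_sqrt A (msqrt A).
Proof.
rewrite /msqrt; case: pselect => [sqrtA _ _ | no_sqrt symA psdA]; first by case: (cid sqrtA).
by case: no_sqrt; exact: psdmx_sqrt.
Qed.

Theorem lemma1 (R : realType) (V : finType) (F : {set {set V}}) (r : V -> nat)
  (dX : V -> measure_display) (X : forall i : V, measurableType (dX i))
  (phi : forall i : V, X i -> 'cV[R]_(r i))
  (b : forall i : V, probability (X i) R)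
  (dO : {set V} -> measure_display) (Om : forall a : {set V}, measurableType (dO a))
  (ba : forall a : {set V}, probability (Om a) R)
  (x : forall (a : {set V}) (i : V), Om a -> X i)
  (hphi : forall (i : V) (k : 'I_(r i)), measurable_fun setT (fun y => phi i y k 0))
  (hL2 : forall (i : V) (k : 'I_(r i)),
     (b i).-integrable setT (fun y => ((phi i y k 0) ^+ 2)%:E))
  (hinv : forall i : V, covm (b i) (phi i) (phi i) \in unitmx)
  (hx : forall a i, a \in F -> i \in a -> measurable_fun setT (x a i))
  (hmarg : forall a i, a \in F -> i \in a ->
     forall A : set (X i), measurable A -> ba a (x a i @^-1` A) = b i A) :
  let Phi := fun a i => fun w => phi i (x a i w) in
  let u := fun a i j =>
     cplx (invmx (covm (b j) (phi j) (phi j)) *m covm (ba a) (Phi a j) (Phi a i)) in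
  let c := fun a i j =>
     cplx (minvsqrt (covm (ba a) (Phi a j) (Phi a j)) *m covm (ba a) (Phi a j) (Phi a i)
           *m minvsqrt (covm (ba a) (Phi a i) (Phi a i))) in
  forall lambda : R[i],
    eigenvalue (@Mop _ _ F r u) lambda = eigenvalue (@Mop _ _ F r c) lambda.
Proof.
move=> Phi u c lambda.
pose Sig i := covm (b i) (phi i) (phi i); pose S i := msqrt (Sig i).
have SS i : S i *m S i = Sig i.
  by case: (msqrt_psd_sqrt (covm_trmx _ _ _) (covm_psd (hphi i) (hL2 i))).
have Su i : S i \in unitmx by have := hinv i; rewrite -/(Sig i) -SS unitmx_mul => /andP[].
have margSig a i : a \in F -> i \in a -> covm (ba a) (Phi a i) (Phi a i) = Sig i.
  by move=> aF ia; apply: covm_pushforward; [exact: hx | exact: hmarg | exact: hphi..].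
have cSSu (e' e : dedge F) : dadj e' e ->
    c (src e) (tgt e') (tgt e) *m cplx (S (tgt e')) =
    cplx (S (tgt e)) *m u (src e) (tgt e') (tgt e).
  case/and3P => e'e _ _; have /andP[eF ee] := valP e.
  rewrite /c /u /minvsqrt !margSig // -/(S _) -/(S _) -/(Sig _) -!cplxM -SS.
  by rewrite invsqrt_conj_mulmx.
apply/esym; apply: (eigenvalue_similar (D := tgt_diagmx F (fun y => cplx (S y)))
                      (D' := tgt_diagmx F (fun y => cplx (invmx (S y))))).
  rewrite tgt_diagmxM -[RHS](tgt_diagmx1 _ F r); congr tgt_diagmx.
  by apply: functional_extensionality_dep => y; rewrite -cplxM mulmxV // cplx1.
exact: Mop_tgt_diagmx.
Qed.
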